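(* Let $P=[-1,\infty)$ and let $\tilde v(x)=p(x)e^{-\lambda x}$, $\tilde w(x)=q(x)e^{-\lambda x}$, where $p$ is a positive rational function on $P$, $q$ is a polynomial and $\lambda>0$. Suppose that $\mathcal F_{\tilde v,\tilde w}$ vanishes on the affine-linear functions and that $P$ is $(\tilde v,\tilde w)$ K-stable. Then the $(\tilde v,\tilde w)$-cscK metric $\omega$ on $\mathbb C$ with moment image $P$ satisfies $\omega\in\mathcal H^\varepsilon_{\alpha,T}$ for every $\varepsilon\in(0,\tfrac12)$.
   Context: $S^1$ acts on $\mathbb C$ by rotation with generator $Y$ of period $2\pi$. A metric on $\mathbb C$ with moment image $P$ is an $S^1$-invariant Kähler metric with proper moment map $\mu$ with image $[-1,\infty)$. Write $H(x)=g(Y,Y)$ at points where $\mu=x$; the symplectic potential $u$ on $(-1,\infty)$ satisfies $u''=1/H$. The metric is $(\tilde v,\tilde w)$-cscK if $-(\tilde vH)''=\tilde w$ on $(-1,\infty)$ (equivalently $\tilde v(\mu)\mathrm{Scal}(\omega)+2\Delta_\omega\tilde v(\mu)+g(Y,Y)\tilde v''(\mu)=\tilde w(\mu)$). Under the stated K-stability such a metric exists, and it is unique since $H$ solves this ODE with $H(-1)=0$, $H'(-1)=2$. Futaki invariant: $\mathcal F_{\tilde v,\tilde w}(f)=2\tilde v(-1)f(-1)-\int_{-1}^\infty f\tilde w\,dx$. $P$ is $(\tilde v,\tilde w)$ K-stable if $\mathcal F_{\tilde v,\tilde w}(f)\ge0$ for every convex piecewise-linear $f$ (maximum of finitely many affine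 functions), with equality only for affine $f$. $P_\delta=[-1+\delta,\infty)$. Class $\mathcal H^\varepsilon_{\alpha,T}$ (with respect to the weight $v=\tilde v$): $\omega$ lies in it if (1) $\sup_P \tilde v^\varepsilon H^2<\infty$; (2) $\sup_P\tilde v^\varepsilon |H'|^2<\infty$; (3) there are $\bar\delta,C>0$ with $|H''|^2<C$ on $[-1,-1+\bar\delta]$; (4) $\sup_P|\tilde v^\varepsilon u|<\infty$ and $\sum_{k\le2}\sup_{P_\delta}|\tilde v^\varepsilon u^{(k)}|<\infty$ for all small $\delta>0$. *)

From HB Require Import structures.
From mathcomp Require Import all_boot all_order all_algebra.
From mathcomp Require Import all_classical all_reals all_analysis.
Set Implicit Arguments. Unset Strict Implicit. Unset Printing Implicit Defensive.
Import Order.TTheory GRing.Theory Num.Theory.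
Import numFieldNormedType.Exports.
Local Open Scope classical_set_scope.
Local Open Scope ring_scope.

Section Defs.
Variable R : realType.

Definition ratfun (a b : {poly R}) (x : R) : R := a.[x] / b.[x].

Definition positive_ratfun_on_P (a b : {poly R}) : Prop :=
  forall x : R, -1 <= x -> b.[x] != 0 /\ 0 < ratfun a b x.

Definition weight_v (a b : {poly R}) (lam : R) (x : R) : R :=
  ratfun a b x * expR (- (lam * x)).
Definition weight_w (q : {poly R}) (lam : R) (x : R) : R :=
  q.[x] * expR (- (lam * x)).

Definition Futaki (v w f : R -> R) : \bar R :=
  ((2 * v (-1) * f (-1))%:E -
   (\int[lebesgue_measure]_(x in `[(-1 : R)%R, +oo[%classic) (f x * w x)%:E))%E.

Definition affine_fun (f : R -> R) : Prop :=
  exists a0 b0 : R, forall x, f x = a0 * x + b0.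

Definition pl_max (a0 b0 : R) (s : seq (R * R)) (x : R) : R :=
  foldr (fun ab m => Num.max (ab.1 * x + ab.2) m) (a0 * x + b0) s.

Definition Futaki_vanishes_on_affine (v w : R -> R) : Prop :=
  forall a0 b0 : R, Futaki v w (fun x => a0 * x + b0) = 0%E.

Definition K_stable (v w : R -> R) : Prop :=
  forall (a0 b0 : R) (s : seq (R * R)),
    (0 <= Futaki v w (pl_max a0 b0 s))%E /\
    (Futaki v w (pl_max a0 b0 s) = 0%E ->
       exists c d : R, forall x, -1 <= x -> pl_max a0 b0 s x = c * x + d).

(* An S^1-invariant Kaehler metric on C with moment image [-1,oo), encoded by
   H(x) = g(Y,Y) at mu = x (H extended to a C^2-ish function on R; only its
   restriction to [-1,oo) matters), which is (v,w)-cscK *)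
Definition cscK_metric (v w H : R -> R) : Prop :=
  (forall x : R, derivable H x 1 /\ derivable (derive1 H) x 1) /\
  (forall x : R, -1 < x -> 0 < H x) /\
  H (-1) = 0 /\ derive1 H (-1) = 2 /\
  (forall x : R, -1 < x -> - (derive1 (derive1 (fun y => v y * H y)) x) = w x).

Definition symplectic_potential (H u : R -> R) : Prop :=
  forall x : R, -1 < x ->
    derivable u x 1 /\ derivable (derive1 u) x 1 /\ derive1 (derive1 u) x = (H x)^-1.

Definition in_H_class (v : R -> R) (eps : R) (H : R -> R) : Prop :=
  (exists C : R, forall x, -1 <= x -> v x `^ eps * H x ^+ 2 <= C) /\
  (exists C : R, forall x, -1 <= x -> v x `^ eps * (derive1 H x) ^+ 2 <= C) /\
  (exists dbar C : R, 0 < dbar /\ 0 < C /\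
     forall x, -1 <= x <= -1 + dbar -> (derive1 (derive1 H) x) ^+ 2 < C) /\
  (forall u : R -> R, symplectic_potential H u ->
     (exists C : R, forall x, -1 < x -> `|v x `^ eps * u x| <= C) /\
     (exists delta0 : R, 0 < delta0 /\ forall delta, 0 < delta < delta0 ->
        exists C : R, forall x, -1 + delta <= x ->
          `|v x `^ eps * u x| + `|v x `^ eps * derive1 u x|
            + `|v x `^ eps * derive1 (derive1 u) x| <= C)).

End Defs.

(* As [(P e^(-lam x))' = (P' - lam P) e^(-lam x)]
   and [P |-> P' - lam P] is bijective on polynomials, [-w] has a second primitive [Q2 e^(-lam x)]
   with [Q2] a polynomial.  Integrating [-(vH)'' = w] twice from [-1] with [H(-1) = 0],
   [H'(-1) = 2] gives [vH = Q2 e^(-lam x) + (an affine function)], and the same primitives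
   compute the Futaki invariant of affine functions: it vanishes exactly when that affine part
   does.  Hence [H = Q2 b / a] with [Q2 = (x + 1) S], [S(-1) <> 0], and [S b] has no zero on
   [-1, +oo) since [H > 0] there.  So [H], [H'], [H''] and, away from [-1], [1/H], [u'] and [u]
   grow polynomially, which the exponential decay of [v^eps] absorbs; near [-1],
   [1/H = O(1/(x + 1))] gives [u' = O(ln (x + 1))], so [u] stays bounded. *)

From mathcomp Require Import all_boot all_order all_algebra.
From mathcomp Require Import all_classical all_reals all_analysis.
From mathcomp Require Import ring lra measurable_realfun.
Set Implicit Arguments. Unset Strict Implicit. Unset Printing Implicit Defensive.
Import Order.TTheory GRing.Theory Num.Theory.
Import numFieldNormedType.Exports.
Local Open Scope ring_scope.
Local Open Scope classical_set_scope.

Section PolyExp.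
Variables (R : realType) (lam : R).

Definition dexp (P : {poly R}) : {poly R} := P^`() - lam *: P.

Definition pexp (P : {poly R}) (x : R) : R := P.[x] * expR (- (lam * x)).

Lemma dexpB (P Q : {poly R}) : dexp (P - Q) = dexp P - dexp Q.
Proof. by rewrite /dexp derivB scalerBr; ring. Qed.

Lemma dexpZ (c : R) (P : {poly R}) : dexp (c *: P) = c *: dexp P.
Proof. by rewrite /dexp derivZ scalerBr !scalerA mulrC. Qed.

Lemma dexpXM (P : {poly R}) : dexp ('X * P) = 'X * dexp P + P.
Proof. by rewrite /dexp derivM derivX mul1r scalerAr; ring. Qed.

Hypothesis lam_neq0 : lam != 0.

(* Inverting [dexp] amounts to the Neumann series - sum_k lam^(-k-1) P^(k). *)
Lemma dexp_surj (P : {poly R}) : exists Q, dexp Q = P.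
Proof.
have [n] := ubnP (size P); elim: n P => [|n IH] P sizeP; first by [].
have [->|P_neq0] := eqVneq P 0; first by exists 0; rewrite /dexp deriv0 scaler0 subr0.
have size_dP : (size (lam^-1 *: P^`()) < n)%N.
  apply: leq_ltn_trans (size_scale_leq _ _) _; rewrite -ltnS.
  exact: leq_trans (lt_size_deriv P_neq0) sizeP.
have [Q dexpQ] := IH _ size_dP.
exists (Q - lam^-1 *: P).
by rewrite dexpB dexpQ /dexp derivZ scalerA mulfV // scale1r; ring.
Qed.

Lemma dexp_eq0 (P : {poly R}) : dexp P = 0 -> P = 0.
Proof.
move=> /eqP; rewrite subr_eq0 => /eqP dP; apply/eqP/negPn/negP => P_neq0.
by have := lt_size_deriv P_neq0; rewrite dP size_scale // ltnn.
Qed.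

End PolyExp.

Section Derivatives.
Variable R : realType.

Lemma is_derive_mulr (c x : R) : is_derive x 1 (fun y => c * y) c.
Proof. by apply: (is_derive_eq (is_deriveZ c (is_derive_id x 1))); rewrite [_%:A]mulr1. Qed.

Lemma is_derive_addr1 (x : R) : is_derive x 1 (fun y => y + 1) 1.
Proof.
apply: (is_derive_eq (is_deriveD (is_derive_id x 1) (is_derive_cst (1 : R) x 1))).
by rewrite addr0.
Qed.

Lemma is_derive_expR_lin (mu x : R) :
  is_derive x 1 (fun y => expR (- (mu * y))) (- mu * expR (- (mu * x))).
Proof.
have lin : is_derive x (1 : R) (fun y => - (mu * y)) (- mu).
  have -> : (fun y => - (mu * y)) = (fun y => - mu * y) by apply/funext => y; rewrite mulNr.
  exact: is_derive_mulr.
have := @is_derive1_comp R expR (fun y => - (mu * y)) x _ _ (is_derive_expR _) lin.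
by rewrite mulrC.
Qed.

Lemma is_derive_pexp (lam : R) (P : {poly R}) (x : R) :
  is_derive x 1 (pexp lam P) (pexp lam (dexp lam P) x).
Proof.
have -> : pexp lam P = horner P * (fun y => expR (- (lam * y))) by [].
apply: (is_derive_eq (is_deriveM (is_derive_poly P x) (is_derive_expR_lin lam x))).
by rewrite /pexp /dexp /GRing.scale /= hornerD hornerN hornerZ; ring.
Qed.

Lemma continuous_pexp (lam : R) (P : {poly R}) : continuous (pexp lam P).
Proof.
move=> x; have [dP _] := is_derive_pexp lam P x.
exact/differentiable_continuous/derivable1_diffP.
Qed.

Definition ratexp (N d : {poly R}) (k : nat) (mu x : R) : R :=
  N.[x] / d.[x] ^+ k * expR (- (mu * x)).

Definition ratexp_deriv (N d : {poly R}) (k : nat) (mu : R) : {poly R} :=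
  N^`() * d - k%:R *: (N * d^`()) - mu *: (N * d).

Lemma is_derive_ratexp (N d : {poly R}) (k : nat) (mu x : R) : d.[x] != 0 ->
  is_derive x 1 (ratexp N d k mu) (ratexp (ratexp_deriv N d k mu) d k.+1 mu x).
Proof.
move=> dx_neq0.
have dkx_neq0 : ((horner d) ^+ k) x != 0 by rewrite exprfctE expf_neq0.
have dV := is_deriveV dkx_neq0 (is_deriveX k (is_derive_poly d x)).
have -> : ratexp N d k mu =
    horner N * (fun y => (((horner d) ^+ k) y)^-1) * (fun y => expR (- (mu * y))).
  by apply/funext => y; rewrite /ratexp /= exprfctE.
apply: (is_derive_eq (is_deriveM (is_deriveM (is_derive_poly N x) dV)
                                 (is_derive_expR_lin mu x))).
rewrite /ratexp /ratexp_deriv /GRing.scale /= !exprfctE !fctE !hornerE.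
case: k dkx_neq0 {dV} => [|k] dkx_neq0; first by rewrite !expr0 !expr1 /=; field.
by rewrite !exprS /=; field; rewrite dx_neq0 expf_neq0.
Qed.

Lemma near_horner_neq0 (d : {poly R}) (x : R) :
  d.[x] != 0 -> \forall y \near x, d.[y] != 0.
Proof.
move=> dx_neq0; have d_cvg : horner d y @[y --> x] --> d.[x] := @continuous_horner _ d x.
near=> y; rewrite -normr_gt0; near: y.
by apply: (@cvgr_norm_gt _ R^o _ _ _ (horner d) d.[x] d_cvg); rewrite normr_gt0.
Unshelve. all: by end_near. Qed.

End Derivatives.

Section Calculus.
Variable R : realType.
Implicit Types (f df g dg : R -> R) (x y : R).

Lemma ger0_is_derive_le f df x y : x <= y ->
  (forall z, x <= z <= y -> is_derive z 1 f (df z)) ->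
  (forall z, x < z < y -> 0 <= df z) -> f x <= f y.
Proof.
rewrite le_eqVlt => /predU1P[<- //|xy] f_df df_ge0.
have [||c /[!in_itv]/= /andP[xc cy]] := @MVT R f df x y xy.
- by move=> z /[!in_itv]/= /andP[xz zy]; apply: f_df; rewrite !ltW.
- apply: derivable_within_continuous => z /[!in_itv]/= xzy.
  by have [] := f_df z xzy.
- rewrite -subr_ge0 => ->; rewrite mulr_ge0 ?df_ge0 ?xc ?cy //.
  by rewrite subr_ge0 ltW.
Qed.

Lemma is_derive_norm_subr_le f df g dg x y : x <= y ->
  (forall z, x <= z <= y -> is_derive z 1 f (df z)) ->
  (forall z, x <= z <= y -> is_derive z 1 g (dg z)) ->
  (forall z, x < z < y -> `|df z| <= dg z) -> `|f y - f x| <= g y - g x.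
Proof.
move=> xy f_df g_dg df_le; rewrite ler_norml; apply/andP; split.
- suff : (g + f) x <= (g + f) y by rewrite !fctE; lra.
  apply: (ger0_is_derive_le (df := dg + df)) => // [z xzy|z /df_le].
    exact: is_deriveD (g_dg z xzy) (f_df z xzy).
  by rewrite ler_norml !fctE => /andP[]; lra.
- suff : (g - f) x <= (g - f) y by rewrite !fctE; lra.
  apply: (ger0_is_derive_le (df := dg - df)) => // [z xzy|z /df_le].
    exact: is_deriveB (g_dg z xzy) (f_df z xzy).
  by rewrite ler_norml !fctE => /andP[]; lra.
Qed.

Lemma is_derive0_eq f df x y : x <= y ->
  (forall z, x <= z <= y -> is_derive z 1 f (df z)) ->
  (forall z, x < z < y -> df z = 0) -> f y = f x.
Proof.
move=> xy f_df df0; apply/eqP; rewrite -subr_eq0 -normr_le0.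
have := is_derive_norm_subr_le (g := cst 0) (dg := cst 0) xy f_df.
by rewrite subrr; apply=> z /df0 ->; rewrite normr0.
Qed.

End Calculus.

(* Growth is measured against [2 + x], which is [>= 1] on [-1, +oo). *)
Definition polygrowth (R : realType) (x0 : R) (f : R -> R) : Prop :=
  exists2 C : R, 0 <= C &
    exists n : nat, forall x, x0 <= x -> `|f x| <= C * (2 + x) ^+ n.

Section Growth.
Variables (R : realType) (x0 : R).
Hypothesis x0_ge : -1 <= x0.
Implicit Types (f g df : R -> R) (P : {poly R}).

Lemma pow2D_ge1 (x : R) (n : nat) : x0 <= x -> 1 <= (2 + x) ^+ n.
Proof. by move=> x0x; apply: exprn_ege1; move: x0_ge; lra. Qed.

Lemma eq_polygrowth f g : (forall x, x0 <= x -> f x = g x) ->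
  polygrowth x0 f -> polygrowth x0 g.
Proof.
by move=> fg [C C_ge0 [n f_le]]; exists C => //; exists n => x x0x; rewrite -fg // f_le.
Qed.

Lemma polygrowthM f g : polygrowth x0 f -> polygrowth x0 g -> polygrowth x0 (f * g).
Proof.
move=> [C C_ge0 [n f_le]] [D D_ge0 [m g_le]].
exists (C * D); first exact: mulr_ge0.
exists (n + m)%N => x x0x; rewrite fctE normrM exprD.
have -> : C * D * ((2 + x) ^+ n * (2 + x) ^+ m) = (C * (2 + x) ^+ n) * (D * (2 + x) ^+ m).
  by ring.
by apply: ler_pM; rewrite ?normr_ge0 ?f_le ?g_le.
Qed.

Lemma polygrowth_horner P : polygrowth x0 (horner P).
Proof.
exists (\sum_(i < size P) `|P`_i|); first exact: sumr_ge0.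
exists (size P) => x x0x; rewrite horner_coef mulr_suml.
apply: le_trans (ler_norm_sum _ _ _) _; apply: ler_sum => i _.
rewrite normrM normrX ler_wpM2l //.
have x_ge : -1 <= x by move: x0_ge; lra.
have x_le : `|x| <= 2 + x by rewrite ler_norml; lra.
apply: le_trans (lerXn2r _ _ _ x_le) _; rewrite ?nnegrE //; first lra.
by apply: ler_weXn2l; [lra | exact: ltnW].
Qed.

Lemma horner_ge_far P : P != 0 ->
  exists M : R, forall x, M <= x -> `|lead_coef P| / 2 <= `|P.[x]|.
Proof.
move=> P_neq0; set n := (size P).-1; set lc := lead_coef P.
have sizeP : size P = n.+1 by rewrite /n prednK // size_poly_gt0.
have lc_gt0 : 0 < `|lc| by rewrite normr_gt0 lead_coef_eq0.
set S := \sum_(i < n) `|P`_i|.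
have S_ge0 : 0 <= S by exact: sumr_ge0.
exists (Num.max 1 (2 * S / `|lc|)) => x.
rewrite ge_max => /andP[x_ge1 x_ge]; have x_gt0 : 0 < x by lra.
have xn_ge1 : 1 <= x ^+ n by apply: exprn_ege1.
have low : `|\sum_(i < n) P`_i * x ^+ i| <= S / x * x ^+ n.
  rewrite mulrAC -mulrA mulr_suml; apply: le_trans (ler_norm_sum _ _ _) _.
  apply: ler_sum => i _; rewrite normrM normrX (ger0_norm (ltW x_gt0)).
  rewrite ler_wpM2l // ler_pdivlMr // -exprSr.
  by apply: ler_weXn2l => //; exact: ltn_ord.
have S_le : S / x <= `|lc| / 2.
  by rewrite ler_pdivrMr // ; rewrite ler_pdivrMr // in x_ge; lra.
have lcx : `|lc| / 2 * x ^+ n <= `|lc * x ^+ n| - S / x * x ^+ n.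
  rewrite normrM normrX (ger0_norm (ltW x_gt0)); nra.
have -> : P.[x] = \sum_(i < n) P`_i * x ^+ i + lc * x ^+ n.
  by rewrite (@horner_coef_wide _ n.+1) ?sizeP // big_ord_recr /= /lc lead_coefE.
rewrite addrC; apply: le_trans (lerB_normD _ _).
have : `|lc| / 2 <= `|lc| / 2 * x ^+ n by rewrite ler_peMr //; lra.
lra.
Qed.

Lemma horner_bounded_below P : (forall x, x0 <= x -> P.[x] != 0) ->
  exists2 m : R, 0 < m & forall x, x0 <= x -> m <= `|P.[x]|.
Proof.
move=> P_neq0; have P0 : P != 0.
  by apply: contra_neq (P_neq0 x0 (lexx _)) => ->; rewrite horner0.
have [M0 far] := horner_ge_far P0.
set M := Num.max x0 M0.
have x0M : x0 <= M by rewrite le_max lexx.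
have cont : {within `[x0, M], continuous (fun x => `|P.[x]|)}.
  apply: continuous_subspaceT => x.
  exact: continuous_comp (@continuous_horner _ P x) (@norm_continuous _ R^o _).
have [c /[!in_itv] /= /andP[x0c _] cmin] := EVT_min x0M cont.
have Pc_gt0 : 0 < `|P.[c]| by rewrite normr_gt0 P_neq0.
have lc_gt0 : 0 < `|lead_coef P| by rewrite normr_gt0 lead_coef_eq0.
exists (Num.min (`|lead_coef P| / 2) `|P.[c]|) => [|x x0x].
  by rewrite lt_min Pc_gt0 andbT; lra.
rewrite ge_min; have [xM|/ltW Mx] := leP x M; first by rewrite cmin ?orbT // in_itv /= x0x.
by rewrite far //; apply: le_trans Mx; rewrite le_max lexx orbT.
Qed.

Lemma polygrowth_inv_horner P : (forall x, x0 <= x -> P.[x] != 0) ->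
  polygrowth x0 (fun x => P.[x]^-1).
Proof.
move=> /horner_bounded_below [m m_gt0 P_ge]; exists m^-1; first by rewrite invr_ge0 ltW.
exists 0%N => x x0x; rewrite expr0 mulr1 normfV lef_pV2 ?posrE ?P_ge //.
by apply: lt_le_trans (P_ge x x0x).
Qed.

Lemma polygrowth_primitive f df :
  (forall x, x0 <= x -> is_derive x 1 f (df x)) ->
  polygrowth x0 df -> polygrowth x0 f.
Proof.
move=> f_df [C C_ge0 [n df_le]]; exists (`|f x0| + C); first by rewrite addr_ge0.
exists n.+1 => x x0x; set K := C * (2 + x) ^+ n.
have incr : `|f x - f x0| <= K * x - K * x0.
  apply: (is_derive_norm_subr_le (df := df) (dg := cst K)) => //.
  - by move=> z /andP[x0z _]; apply: f_df.
  - by move=> z _; apply: is_derive_mulr.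
  move=> z /andP[x0z zx].
  apply: le_trans (df_le z (ltW x0z)) _; apply: ler_wpM2l => //.
  by apply: lerXn2r; rewrite ?nnegrE; move: x0_ge; lra.
have K_ge0 : 0 <= K by rewrite mulr_ge0 // exprn_ge0 //; move: x0_ge; lra.
have Kx : K * x - K * x0 <= K * (2 + x).
  by rewrite -mulrBr ler_wpM2l //; move: x0_ge; lra.
have fx0 : `|f x0| <= `|f x0| * (2 + x) ^+ n.+1 by rewrite ler_peMr ?pow2D_ge1.
have -> : (`|f x0| + C) * (2 + x) ^+ n.+1 = `|f x0| * (2 + x) ^+ n.+1 + K * (2 + x).
  by rewrite /K exprSr; ring.
rewrite -[f x](subrK (f x0)); apply: le_trans (ler_normD _ _) _; lra.
Qed.

(* [(2 + x) ^+ n <= (n / c) ^+ n * e^(c (2 + x))], from [t <= e^t] at [t = c (2 + x) / n] *)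
Lemma pow_expR_bounded (n : nat) (c : R) : 0 < c ->
  exists C, forall x, -1 <= x -> (2 + x) ^+ n * expR (- (c * x)) <= C.
Proof.
move=> c_gt0; case: n => [|m].
  by exists (expR c) => x x_ge; rewrite expr0 mul1r ler_expR; nra.
set n := m.+1; exists ((n%:R / c) ^+ n * expR (2 * c)) => x x_ge.
set t := 2 + x; have t_ge1 : 1 <= t by rewrite /t; lra.
have n_gt0 : 0 < n%:R :> R by rewrite ltr0n.
have ct_le : c * t / n%:R <= expR (c * t / n%:R) by apply: le_trans (expR_ge1Dx _); lra.
have ctn_le : (c * t / n%:R) ^+ n <= expR (c * t).
  have -> : expR (c * t) = expR (c * t / n%:R) ^+ n.
    by rewrite -expRM_natl; congr expR; field; lra.
  apply: lerXn2r => //; rewrite nnegrE; last exact/ltW/expR_gt0.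
  by apply: divr_ge0; nra.
have -> : expR (2 * c) = expR (c * t) * expR (- (c * x)).
  by rewrite -expRD /t; congr expR; ring.
rewrite mulrA; apply: ler_wpM2r; first exact/ltW/expR_gt0.
have -> : t ^+ n = (n%:R / c) ^+ n * (c * t / n%:R) ^+ n.
  by rewrite -exprMn; congr (_ ^+ _); field; apply/andP; split; lra.
by apply: ler_wpM2l => //; apply: exprn_ge0; apply: divr_ge0; lra.
Qed.

Lemma polygrowth_expR_bounded f (c : R) : 0 < c -> polygrowth x0 f ->
  exists C, forall x, x0 <= x -> `|f x| * expR (- (c * x)) <= C.
Proof.
move=> c_gt0 [D D_ge0 [n f_le]]; have [C pow_le] := pow_expR_bounded n c_gt0.
exists (D * C) => x x0x; apply: le_trans (_ : D * (2 + x) ^+ n * expR (- (c * x)) <= _).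
  by rewrite ler_wpM2r ?f_le // ltW // expR_gt0.
by rewrite -mulrA ler_wpM2l // pow_le //; move: x0_ge; lra.
Qed.

Lemma polygrowth_ratexp0 (N d : {poly R}) (k : nat) :
  (forall x, x0 <= x -> d.[x] != 0) -> polygrowth x0 (ratexp N d k 0).
Proof.
move=> d_neq0; apply: (@eq_polygrowth (horner N * fun x => (d ^+ k).[x]^-1)).
  by move=> x _; rewrite /ratexp mul0r oppr0 expR0 mulr1 -horner_exp.
apply: polygrowthM; first exact: polygrowth_horner.
by apply: polygrowth_inv_horner => x x0x; rewrite horner_exp expf_neq0 ?d_neq0.
Qed.

End Growth.

Section PexpIntegral.
Variables (R : realType) (lam : R).
Hypothesis lam_gt0 : 0 < lam.
Local Notation mu := (@lebesgue_measure R).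
Implicit Types P Q : {poly R}.

Lemma pexp_cvg0 Q : pexp lam Q x @[x --> +oo] --> 0.
Proof.
have [C QX_le] := polygrowth_expR_bounded (lerN10 R) lam_gt0
  (polygrowth_horner (lerN10 R) (('X + 2%:P) * Q)).
apply/cvgrPdist_le => e e_gt0; exists (Num.max 0 (C / e)); split; first exact: num_real.
move=> x; rewrite gt_max => /andP[x_gt0 Cx]; rewrite sub0r normrN.
have := QX_le x (ltW x_gt0).
rewrite hornerM hornerD hornerX hornerC normrM (ger0_norm (_ : 0 <= x + 2)); last lra.
rewrite /pexp normrM (ger0_norm (ltW (expR_gt0 _))) -mulrA mulrC.
set A := _ * expR _ => le_C; rewrite ltr_pdivrMr // in Cx.
have A_ge0 : 0 <= A by rewrite mulr_ge0 // ltW // expR_gt0.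
nra.
Qed.

Lemma pexp_ge0 P : (forall x, -1 <= x -> 0 <= P.[x]) ->
  forall x, -1 <= x -> 0 <= pexp lam P x.
Proof. by move=> P_ge0 x x_ge; rewrite mulr_ge0 ?P_ge0 // ltW // expR_gt0. Qed.

Lemma integral_pexp_ge0 P Q : dexp lam Q = P -> (forall x, -1 <= x -> 0 <= P.[x]) ->
  (\int[mu]_(x in `[(-1 : R)%R, +oo[) (pexp lam P x)%:E = (- pexp lam Q (-1))%:E)%E.
Proof.
move=> dQ P_ge0; rewrite (@ge0_continuous_FTC2y R (pexp lam P) (pexp lam Q) (-1) 0).
- by rewrite sub0e EFinN.
- exact: pexp_ge0.
- exact/continuous_subspaceT/continuous_pexp.
- exact: pexp_cvg0.
- by move=> x _; have [] := is_derive_pexp lam Q x.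
- exact/cvg_at_right_filter/continuous_pexp.
- by move=> x _; rewrite derive1E; have [_ ->] := is_derive_pexp lam Q x; rewrite dQ.
Qed.

Lemma integrable_pexp_ge0 P Q : dexp lam Q = P -> (forall x, -1 <= x -> 0 <= P.[x]) ->
  mu.-integrable `[(-1 : R)%R, +oo[ (EFin \o pexp lam P).
Proof.
move=> dQ P_ge0; apply/integrableP; split.
  apply/measurable_EFinP; apply: (@measurable_funS _ _ _ _ setT) => //.
  by apply: continuous_measurable_fun; exact: continuous_pexp.
rewrite (_ : (\int[mu]_(x in _) _)%E =
             \int[mu]_(x in `[(-1 : R)%R, +oo[) (pexp lam P x)%:E)%E.
  by rewrite (integral_pexp_ge0 dQ P_ge0) ltry.
apply: eq_integral => x; rewrite inE /= in_itv /= andbT => x_ge.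
by rewrite /= ger0_norm // pexp_ge0.
Qed.

(* Reduce to nonnegative integrands by adding a polynomial dominating |P| on [-1, oo). *)
Lemma integral_pexp P Q : dexp lam Q = P ->
  (\int[mu]_(x in `[(-1 : R)%R, +oo[) (pexp lam P x)%:E = (- pexp lam Q (-1))%:E)%E.
Proof.
move=> dQ; have lam_neq0 : lam != 0 by rewrite gt_eqF.
have [C C_ge0 [n P_le]] := polygrowth_horner (lexx (-1 : R)) P.
set S := C *: ('X + 2%:P) ^+ n.
have Sx x : S.[x] = C * (2 + x) ^+ n.
  by rewrite /S hornerZ horner_exp hornerD hornerX hornerC addrC.
have S_ge0 x : -1 <= x -> 0 <= S.[x].
  by move=> x_ge; rewrite Sx mulr_ge0 // exprn_ge0 //; lra.
have PS_ge0 x : -1 <= x -> 0 <= (P + S).[x].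
  by move=> x_ge; have := P_le x x_ge; rewrite hornerD Sx ler_norml => /andP[]; lra.
have [QS dQS] := dexp_surj lam_neq0 S.
have [QPS dQPS] := dexp_surj lam_neq0 (P + S).
have -> : Q = QPS - QS.
  by apply/eqP; rewrite -subr_eq0; apply/eqP/(dexp_eq0 lam_neq0); rewrite !dexpB dQ dQS dQPS; ring.
have -> : pexp lam P = pexp lam (P + S) \- pexp lam S.
  by apply/funext => x; rewrite /pexp /= hornerD; ring.
rewrite integralB_EFin //; last 2 first.
- exact: integrable_pexp_ge0 dQPS PS_ge0.
- exact: integrable_pexp_ge0 dQS S_ge0.
rewrite (integral_pexp_ge0 dQPS PS_ge0) (integral_pexp_ge0 dQS S_ge0) -EFinB.
by congr EFin; rewrite /pexp !hornerE; ring.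
Qed.

End PexpIntegral.

Lemma powR_le1D (R : realType) (y e : R) : 0 < y -> 0 <= e <= 1 -> y `^ e <= 1 + y.
Proof.
move=> y_gt0 /andP[e_ge0 e_le1]; have [y_le1|y_gt1] := leP y 1.
  by have := @ger_powR _ y (introT andP (conj y_gt0 y_le1)) 0 e e_ge0; rewrite powRr0; lra.
by have := @ler_powR _ y (ltW y_gt1) e 1 e_le1; rewrite powRr1; lra.
Qed.

Lemma is_derive_lnD1 (R : realType) (x : R) : -1 < x ->
  is_derive x 1 (fun y => ln (y + 1)) (x + 1)^-1.
Proof.
move=> x_gt; have x1_gt0 : 0 < x + 1 by lra.
have := @is_derive1_comp R (@ln R) (fun y => y + 1) x _ _
  (is_derive1_ln x1_gt0) (is_derive_addr1 x).
by rewrite mulr1.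
Qed.

Lemma is_derive_lnD1_primitive (R : realType) (x : R) : -1 < x ->
  is_derive x 1 (fun y => (y + 1) * (1 - ln (y + 1))) (- ln (x + 1)).
Proof.
move=> x_gt; have x1_neq0 : x + 1 != 0 by rewrite gt_eqF //; lra.
apply: (is_derive_eq (is_deriveM (is_derive_addr1 x)
                                 (is_deriveB (is_derive_cst (1 : R) x 1) (is_derive_lnD1 x_gt)))).
by rewrite /GRing.scale /= !fctE /cst; field.
Qed.

Section CscK.
Variables (R : realType) (a b q : {poly R}) (lam : R) (H : R -> R).
Hypothesis ab_pos : positive_ratfun_on_P a b.
Hypothesis lam_gt0 : 0 < lam.
Hypothesis futaki0 : Futaki_vanishes_on_affine (weight_v a b lam) (weight_w q lam).
Hypothesis cscK : cscK_metric (weight_v a b lam) (weight_w q lam) H.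

Local Notation v := (weight_v a b lam).
Local Notation w := (weight_w q lam).
Local Notation dH := (derive1 H).
Local Notation vH := (fun y => v y * H y).
Implicit Types x y z : R.

Let lam_neq0 : lam != 0. Proof. by rewrite gt_eqF. Qed.

Lemma b_neq0 x : -1 <= x -> b.[x] != 0.
Proof. by move=> /ab_pos[]. Qed.

Lemma a_neq0 x : -1 <= x -> a.[x] != 0.
Proof. by move=> /ab_pos[_]; rewrite /ratfun; apply: contraTneq => ->; rewrite mul0r ltxx. Qed.

Lemma v_gt0 x : -1 <= x -> 0 < v x.
Proof. by move=> /ab_pos[_ ab_gt0]; rewrite mulr_gt0 // expR_gt0. Qed.

Lemma vE : v = ratexp a b 1 lam.
Proof. by apply/funext => x; rewrite /weight_v /ratfun /ratexp expr1. Qed.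

Lemma is_derive_H x : is_derive x 1 H (dH x).
Proof. by have [dH_ex _] := cscK.1 x; apply: DeriveDef dH_ex _; rewrite derive1E. Qed.

Lemma is_derive_dH x : is_derive x 1 dH (derive1 dH x).
Proof. by have [_ ddH_ex] := cscK.1 x; apply: DeriveDef ddH_ex _; rewrite derive1E. Qed.

Lemma H_gt0 x : -1 < x -> 0 < H x.
Proof. by case: cscK => _ [+ _]; apply. Qed.

Lemma H_N1 : H (-1) = 0.
Proof. by case: cscK => _ [_ []]. Qed.

Lemma dH_N1 : dH (-1) = 2.
Proof. by case: cscK => _ [_ [_ []]]. Qed.

Lemma cscK_ode x : -1 < x -> derive1 (derive1 vH) x = - w x.
Proof. by case: cscK => _ [_ [_ [_ +]]] => /(_ x) ode /ode <-; rewrite opprK. Qed.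

Definition dvH (z : R) : R := v z * dH z + H z * ratexp (ratexp_deriv a b 1 lam) b 2 lam z.

Lemma is_derive_vH z : b.[z] != 0 -> is_derive z 1 vH (dvH z).
Proof.
move=> bz; rewrite vE.
apply: (is_derive_eq (is_deriveM (is_derive_ratexp a 1 lam bz) (is_derive_H z))).
by rewrite /dvH vE /GRing.scale /=; ring.
Qed.

Lemma derive_vH_near z : b.[z] != 0 -> \forall y \near z, derive1 vH y = dvH y.
Proof.
move=> bz; apply: filterS (near_horner_neq0 bz) => y by0.
by rewrite derive1E; have [_ ->] := is_derive_vH by0.
Qed.

Lemma is_derive_derive_vH z : b.[z] != 0 ->
  is_derive z 1 (derive1 vH) (derive1 (derive1 vH) z).
Proof.
move=> bz; suff dvH_ex : derivable (derive1 vH) z 1.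
  by apply: DeriveDef dvH_ex _; rewrite derive1E.
apply: near_eq_derivable (filterS _ (derive_vH_near bz)) _ => [y ->//|].
have [v_ex _] := is_derive_ratexp a 1 lam bz.
have [vd_ex _] := is_derive_ratexp (ratexp_deriv a b 1 lam) 2 lam bz.
have [H_ex _] := is_derive_H z; have [dH_ex _] := is_derive_dH z.
by rewrite /dvH -vE in v_ex; apply: derivableD; apply: derivableM.
Qed.

Definition Q1 : {poly R} := sval (cid (dexp_surj lam_neq0 (- q))).
Definition Q2 : {poly R} := sval (cid (dexp_surj lam_neq0 Q1)).

Lemma dexp_Q1 : dexp lam Q1 = - q.
Proof. exact: svalP (cid (dexp_surj lam_neq0 (- q))). Qed.

Lemma dexp_Q2 : dexp lam Q2 = Q1.
Proof. exact: svalP (cid (dexp_surj lam_neq0 Q1)). Qed.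

Lemma derive_vH_sub_pexp x : -1 <= x ->
  derive1 vH x - pexp lam Q1 x = 2 * v (-1) - pexp lam Q1 (-1).
Proof.
move=> x_ge; set F1 := derive1 vH \- pexp lam Q1.
have -> : derive1 vH x - pexp lam Q1 x = F1 (-1).
  apply: (is_derive0_eq (df := fun y => derive1 (derive1 vH) y + w y) x_ge).
    move=> y /andP[y_ge _].
    apply: (is_derive_eq (is_deriveB (is_derive_derive_vH (b_neq0 y_ge))
                                     (is_derive_pexp lam Q1 y))).
    by rewrite dexp_Q1 /pexp /weight_w hornerN; ring.
  by move=> y /andP[y_gt _]; rewrite cscK_ode // addNr.
rewrite /F1 /= derive1E; have [_ ->] := is_derive_vH (b_neq0 (lexx (-1))).
by rewrite /dvH H_N1 dH_N1 mul0r addr0 mulrC.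
Qed.

Lemma vH_sub_pexp_affine x : -1 <= x ->
  v x * H x - pexp lam Q2 x = - pexp lam Q2 (-1) + (2 * v (-1) - pexp lam Q1 (-1)) * (x + 1).
Proof.
move=> x_ge; set c := 2 * v (-1) - pexp lam Q1 (-1).
have dF y : -1 <= y -> is_derive y 1 (fun y => v y * H y - pexp lam Q2 y - c * y) 0.
  move=> y_ge; have by0 := b_neq0 y_ge.
  apply: (is_derive_eq (is_deriveB (is_deriveB (is_derive_vH by0) (is_derive_pexp lam Q2 y))
                                   (is_derive_mulr c y))).
  rewrite dexp_Q2 /c -(derive_vH_sub_pexp y_ge) derive1E.
  by have [_ ->] := is_derive_vH by0; ring.
have := is_derive0_eq (df := cst 0) x_ge (fun z z_in => dF z (andP z_in).1) (fun _ _ => erefl).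
by rewrite /= H_N1 mulr0 mulrN1 mulrDr mulr1; lra.
Qed.

(* Together with [vH_sub_pexp_affine]: [F] vanishes on affine functions iff [vH = pexp Q2]. *)
Lemma Futaki_affine (a0 b0 : R) : Futaki v w (fun x => a0 * x + b0) =
  ((b0 - a0) * (2 * v (-1) - pexp lam Q1 (-1)) + a0 * pexp lam Q2 (-1))%:E.
Proof.
set Q := a0 *: (Q2 - 'X * Q1) - b0 *: Q1.
have dQ : dexp lam Q = (a0 *: 'X + b0%:P) * q.
  rewrite /Q dexpB !dexpZ dexpB dexpXM dexp_Q1 dexp_Q2.
  have -> : Q1 - ('X * - q + Q1) = 'X * q by rewrite mulrN; ring.
  by rewrite scalerN opprK mulrDl -scalerAl mul_polyC.
rewrite /Futaki (_ : (fun x => ((a0 * x + b0) * w x)%:E) =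
                     fun x => (pexp lam ((a0 *: 'X + b0%:P) * q) x)%:E); last first.
  by apply/funext => x; rewrite /pexp /weight_w hornerM hornerD hornerZ hornerX hornerC mulrA.
rewrite (integral_pexp lam_gt0 dQ) -EFinB; congr EFin.
by rewrite /Q /pexp !(hornerD, hornerN, hornerZ, hornerM, hornerX); ring.
Qed.

Lemma pexp_Q1_N1 : pexp lam Q1 (-1) = 2 * v (-1).
Proof.
have := futaki0 0 1; rewrite Futaki_affine subr0 mul1r mul0r addr0 => -[] /eqP.
by rewrite subr_eq0 => /eqP ->.
Qed.

Lemma pexp_Q2_N1 : pexp lam Q2 (-1) = 0.
Proof. by have := futaki0 1 1; rewrite Futaki_affine subrr mul0r add0r mul1r => -[]. Qed.

Lemma vH_eq x : -1 <= x -> v x * H x = pexp lam Q2 x.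
Proof.
move=> x_ge; have := vH_sub_pexp_affine x_ge.
by rewrite pexp_Q2_N1 pexp_Q1_N1 subrr mul0r oppr0 addr0 => /eqP; rewrite subr_eq0 => /eqP.
Qed.

Lemma H_eq x : -1 <= x -> H x = ratexp (Q2 * b) a 1 0 x.
Proof.
move=> x_ge; have := vH_eq x_ge; rewrite /ratexp /weight_v /ratfun /pexp.
rewrite hornerM expr1 mul0r oppr0 expR0 mulr1 => vH_Q2.
have [ax bx] := (a_neq0 x_ge, b_neq0 x_ge).
have Ex : expR (- (lam * x)) != 0 by rewrite gt_eqF // expR_gt0.
apply: (@mulfI _ (a.[x] / b.[x] * expR (- (lam * x)))).
  by rewrite !mulf_neq0 ?invr_eq0.
by rewrite vH_Q2; field; rewrite ax bx.
Qed.

Lemma Q2_N1 : root Q2 (-1).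
Proof.
by have := pexp_Q2_N1; rewrite /pexp => /eqP; rewrite mulf_eq0 (gt_eqF (expR_gt0 _)) orbF.
Qed.

Definition S : {poly R} := sval (cid (elimT (factor_theorem Q2 (-1)) Q2_N1)).

Lemma Q2_factor : Q2 = S * ('X + 1%:P).
Proof.
have := svalP (cid (elimT (factor_theorem Q2 (-1)) Q2_N1)).
by rewrite -/S polyCN opprK.
Qed.

(* [Q2 = S (X + 1)] and [Q2' - lam Q2 = Q1] give [S(-1) = Q1(-1) = 2 v(-1) e^(-lam)]. *)
Lemma S_N1_neq0 : S.[-1] != 0.
Proof.
have Q1_N1 : Q1.[-1] != 0.
  apply: contraTneq (v_gt0 (lexx (-1))) => Q1_0; rewrite -leNgt.
  by have := pexp_Q1_N1; rewrite /pexp Q1_0 mul0r; lra.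
move: Q1_N1; rewrite -dexp_Q2 /dexp {1}Q2_factor derivM derivD derivX derivC addr0.
rewrite !(hornerD, hornerN, hornerZ, hornerM, hornerX, hornerC).
by rewrite (rootP Q2_N1) addNr !mulr0 !add0r subr0 mulr1.
Qed.

Lemma Sb_neq0 x : -1 <= x -> (S * b).[x] != 0.
Proof.
rewrite le_eqVlt => /predU1P[<-|x_gt]; first by rewrite hornerM mulf_neq0 ?S_N1_neq0 ?b_neq0.
apply: contraTneq (H_gt0 x_gt) => Sbx0; rewrite H_eq ?ltW //.
by rewrite /ratexp Q2_factor (mulrAC S) hornerM Sbx0 !mul0r ltxx.
Qed.

Lemma Q2b_neq0 x : -1 < x -> (Q2 * b).[x] != 0.
Proof.
move=> x_gt; rewrite Q2_factor (mulrAC S) hornerM mulf_neq0 ?Sb_neq0 ?ltW //.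
by rewrite hornerD hornerX hornerC; lra.
Qed.

Lemma invH_eq x : -1 < x -> (H x)^-1 = ratexp a (Q2 * b) 1 0 x.
Proof.
move=> x_gt; rewrite H_eq ?ltW // /ratexp !expr1 mul0r oppr0 expR0 !mulr1.
by rewrite invf_div.
Qed.

Lemma invH_near : exists2 K, 0 <= K & forall x, -1 < x <= 0 -> `|(H x)^-1| <= K / (x + 1).
Proof.
have [C C_ge0 [n le_C]] := polygrowth_ratexp0 (lexx (-1)) a 1 Sb_neq0.
exists (C * 2 ^+ n) => [|x /andP[x_gt x_le0]]; first by rewrite mulr_ge0 ?exprn_ge0.
have x1_gt0 : 0 < x + 1 by lra.
rewrite invH_eq // Q2_factor (mulrAC S).
have -> : ratexp a (S * b * ('X + 1%:P)) 1 0 x = ratexp a (S * b) 1 0 x / (x + 1).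
  by rewrite /ratexp hornerM hornerD hornerX hornerC !expr1 mul0r oppr0 expR0 !mulr1 invfM mulrA.
rewrite normrM normfV (gtr0_norm x1_gt0) ler_pM2r ?invr_gt0 //.
apply: le_trans (le_C x (ltW x_gt)) _; rewrite ler_wpM2l //.
by apply: lerXn2r; rewrite ?nnegrE; lra.
Qed.

Lemma polygrowth_invH d : 0 < d -> polygrowth (-1 + d) (fun x => (H x)^-1).
Proof.
move=> d_gt0; have d_ge : -1 <= -1 + d by lra.
apply: (@eq_polygrowth _ _ (ratexp a (Q2 * b) 1 0)) => [x x_ge|].
  by rewrite invH_eq //; lra.
by apply: polygrowth_ratexp0 => // x x_ge; rewrite Q2b_neq0 //; lra.
Qed.

Lemma polygrowth_H : polygrowth (-1) H.
Proof.
apply: (@eq_polygrowth _ _ (ratexp (Q2 * b) a 1 0)) => [x x_ge|]; first by rewrite H_eq.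
by apply: polygrowth_ratexp0 => //; exact: a_neq0.
Qed.

Lemma dH_eq x : -1 < x -> dH x = ratexp (ratexp_deriv (Q2 * b) a 1 0) a 2 0 x.
Proof.
move=> x_gt; have H_ratexp : is_derive x 1 H (ratexp (ratexp_deriv (Q2 * b) a 1 0) a 2 0 x).
  apply: (near_eq_is_derive _ (is_derive_ratexp (Q2 * b) 1 0 (a_neq0 (ltW x_gt)))).
  by near=> y; rewrite H_eq // ltW //; near: y; exact: lt_nbhsr.
by rewrite derive1E; have [_ ->] := H_ratexp.
Unshelve. all: by end_near. Qed.

Lemma ddH_eq x : -1 < x ->
  derive1 dH x = ratexp (ratexp_deriv (ratexp_deriv (Q2 * b) a 1 0) a 2 0) a 3 0 x.
Proof.
move=> x_gt; have dH_ratexp : is_derive x 1 dH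
    (ratexp (ratexp_deriv (ratexp_deriv (Q2 * b) a 1 0) a 2 0) a 3 0 x).
  apply: (near_eq_is_derive _ (is_derive_ratexp _ 2 0 (a_neq0 (ltW x_gt)))).
  by near=> y; rewrite dH_eq //; near: y; exact: lt_nbhsr.
by rewrite derive1E; have [_ ->] := dH_ratexp.
Unshelve. all: by end_near. Qed.

Lemma polygrowth_dH : polygrowth (-1) dH.
Proof.
have [C C_ge0 [n le_C]] := polygrowth_ratexp0 (lexx (-1)) (ratexp_deriv (Q2 * b) a 1 0) 2 a_neq0.
exists (C + 2); first lra.
exists n => x; rewrite le_eqVlt => /predU1P[<-|x_gt].
  by rewrite dH_N1 (_ : 2 + -1 = 1 :> R) ?expr1n ?mulr1 ?ger0_norm; lra.
rewrite dH_eq //; apply: le_trans (le_C x (ltW x_gt)) _.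
by rewrite ler_wpM2r ?exprn_ge0 //; lra.
Qed.

Lemma ddH_bounded_near : exists C, forall x, -1 <= x <= 0 -> `|derive1 dH x| <= C.
Proof.
have [C C_ge0 [n le_C]] := polygrowth_ratexp0 (lexx (-1))
  (ratexp_deriv (ratexp_deriv (Q2 * b) a 1 0) a 2 0) 3 a_neq0.
exists (Num.max `|derive1 dH (-1)| (C * 2 ^+ n)) => x /andP[]; rewrite le_max.
rewrite le_eqVlt => /predU1P[<- _|x_gt x_le0]; first by rewrite lexx.
rewrite ddH_eq //; apply/orP; right; apply: le_trans (le_C x (ltW x_gt)) _.
by rewrite ler_wpM2l // lerXn2r ?nnegrE //; lra.
Qed.

Lemma ddH_sq_bounded_near : exists dbar C : R, 0 < dbar /\ 0 < C /\
  forall x, -1 <= x <= -1 + dbar -> derive1 dH x ^+ 2 < C.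
Proof.
have [C ddH_le] := ddH_bounded_near.
exists 1, (C ^+ 2 + 1); do 2!split => //; first by have := sqr_ge0 C; lra.
move=> x /andP[x_ge x_le]; have ddH_x : `|derive1 dH x| <= C by apply: ddH_le; lra.
have : `|derive1 dH x| ^+ 2 <= C ^+ 2.
  by rewrite lerXn2r ?nnegrE // (le_trans _ ddH_x).
by rewrite real_normK ?num_real //; lra.
Qed.

Section Potential.
Variable u : R -> R.
Hypothesis u_pot : symplectic_potential H u.
Local Notation du := (derive1 u).

Lemma is_derive_u x : -1 < x -> is_derive x 1 u (du x).
Proof. by move=> /u_pot[u_ex _]; apply: DeriveDef u_ex _; rewrite derive1E. Qed.

Lemma is_derive_du x : -1 < x -> is_derive x 1 du (H x)^-1.
Proof. by move=> /u_pot[_ [du_ex <-]]; apply: DeriveDef du_ex _; rewrite derive1E. Qed.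

Lemma polygrowth_du d : 0 < d -> polygrowth (-1 + d) du.
Proof.
move=> d_gt0; apply: (polygrowth_primitive _ _ (polygrowth_invH d_gt0)); first lra.
by move=> x x_ge; apply: is_derive_du; lra.
Qed.

Lemma polygrowth_u d : 0 < d -> polygrowth (-1 + d) u.
Proof.
move=> d_gt0; apply: (polygrowth_primitive _ _ (polygrowth_du d_gt0)); first lra.
by move=> x x_ge; apply: is_derive_u; lra.
Qed.

Lemma du_near_le K : 0 <= K -> (forall x, -1 < x <= 0 -> `|(H x)^-1| <= K / (x + 1)) ->
  forall x, -1 < x <= 0 -> `|du 0 - du x| <= - (K * ln (x + 1)).
Proof.
move=> K_ge0 invH_le x /andP[x_gt x_le0].
have := @is_derive_norm_subr_le R du (fun y => (H y)^-1)
  (fun y => K * ln (y + 1)) (fun y => K * (y + 1)^-1) x 0 x_le0.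
rewrite add0r ln1 mulr0 sub0r; apply=> [y /andP[y_ge _]|y /andP[y_ge _]|y /andP[y_gt y_lt]].
- by apply: is_derive_du; lra.
- by apply: is_deriveZ; apply: is_derive_lnD1; lra.
- by apply: invH_le; apply/andP; split; lra.
Qed.

(* [du = O(ln (x + 1))] is integrable at [-1]: compare [u - du 0 * x] with a primitive of it. *)
Lemma u_bounded_near : exists B, forall x, -1 < x <= 0 -> `|u x| <= B.
Proof.
have [K K_ge0 invH_le] := invH_near; have du_le := du_near_le K_ge0 invH_le.
exists (`|u 0| + `|du 0| + K) => x /andP[x_gt x_le0].
have key : `|(u 0 - du 0 * 0) - (u x - du 0 * x)|
    <= K * ((0 + 1) * (1 - ln (0 + 1))) - K * ((x + 1) * (1 - ln (x + 1))).
  apply: (@is_derive_norm_subr_le R (fun y => u y - du 0 * y) (fun y => du y - du 0)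
    (fun y => K * ((y + 1) * (1 - ln (y + 1)))) (fun y => K * - ln (y + 1)) x 0 x_le0).
  - move=> y /andP[y_ge _].
    exact: is_deriveB (is_derive_u (lt_le_trans x_gt y_ge)) (is_derive_mulr (du 0) y).
  - by move=> y /andP[y_ge _]; apply: is_deriveZ; apply: is_derive_lnD1_primitive; lra.
  - by move=> y /andP[y_gt y_lt]; rewrite mulrN distrC; apply: du_le; lra.
rewrite mulr0 subr0 add0r ln1 subr0 !mulr1 in key.
have P_ge0 : 0 <= K * ((x + 1) * (1 - ln (x + 1))).
  have : ln (x + 1) <= 0 by apply: ln_le0; lra.
  by move=> ln_le0; rewrite mulr_ge0 // mulr_ge0; lra.
have dux : `|du 0 * x| <= `|du 0| by rewrite normrM ler_piMr // ler_norml; lra.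
move: key dux; rewrite !ler_norml => /andP[key1 key2] /andP[dux1 dux2].
have := ler_norm (u 0); have := ler_norm (- u 0); rewrite normrN.
by lra.
Qed.

End Potential.

Section Weighted.
Variable eps : R.
Hypothesis eps_gt0 : 0 < eps.
Hypothesis eps_le1 : eps <= 1.

Lemma powR_v_le x : -1 <= x -> v x `^ eps <= (1 + a.[x] / b.[x]) * expR (- (eps * lam * x)).
Proof.
move=> x_ge; have [_ ab_gt0] := ab_pos x_ge.
rewrite /weight_v /ratfun powRM; [|exact: ltW|exact/ltW/expR_gt0].
rewrite -expRM.
rewrite (_ : - (lam * x) * eps = - (eps * lam * x)); last by ring.
by rewrite ler_pM2r ?expR_gt0 // powR_le1D // eps_le1 andbT ltW.
Qed.

Lemma weighted_bounded x0 f : -1 <= x0 -> polygrowth x0 f ->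
  exists C, forall x, x0 <= x -> v x `^ eps * `|f x| <= C.
Proof.
move=> x0_ge f_growth.
have ab_growth : polygrowth x0 (fun x => 1 + a.[x] / b.[x]).
  apply: (@eq_polygrowth _ _ (ratexp (b + a) b 1 0)) => [x x0x|].
    rewrite /ratexp hornerD expr1 mul0r oppr0 expR0 mulr1 mulrDl divff //.
    by apply: b_neq0; apply: le_trans x0x.
  by apply: polygrowth_ratexp0 => // x x0x; apply: b_neq0; apply: le_trans x0x.
have [C le_C] := polygrowth_expR_bounded x0_ge (mulr_gt0 eps_gt0 lam_gt0)
  (polygrowthM ab_growth f_growth).
exists C => x x0x; have x_ge : -1 <= x by apply: le_trans x0x.
apply: le_trans (le_C x x0x); rewrite fctE normrM mulrAC.
rewrite (ger0_norm (_ : 0 <= 1 + _)); last by have [_] := ab_pos x_ge; rewrite /ratfun; lra.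
by rewrite ler_wpM2r // powR_v_le.
Qed.

Lemma normM_powR (y z : R) : `|z `^ eps * y| = z `^ eps * `|y|.
Proof. by rewrite normrM ger0_norm // powR_ge0. Qed.

Lemma weighted_H2_bounded : exists C, forall x, -1 <= x -> v x `^ eps * H x ^+ 2 <= C.
Proof.
have [C le_C] := weighted_bounded (lexx (-1)) (polygrowthM polygrowth_H polygrowth_H).
by exists C => x x_ge; rewrite -[H x ^+ 2]ger0_norm ?sqr_ge0 // expr2 le_C.
Qed.

Lemma weighted_dH2_bounded : exists C, forall x, -1 <= x -> v x `^ eps * dH x ^+ 2 <= C.
Proof.
have [C le_C] := weighted_bounded (lexx (-1)) (polygrowthM polygrowth_dH polygrowth_dH).
by exists C => x x_ge; rewrite -[dH x ^+ 2]ger0_norm ?sqr_ge0 // expr2 le_C.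
Qed.

Lemma weighted_u_bounded u : symplectic_potential H u ->
  exists C, forall x, -1 < x -> `|v x `^ eps * u x| <= C.
Proof.
move=> u_pot; have [B u_le] := u_bounded_near u_pot.
have := polygrowth_u u_pot ltr01; rewrite addNr => u_growth.
have [C1 le_C1] := weighted_bounded (lerN10 R) u_growth.
have [C2 le_C2] := weighted_bounded (lexx (-1)) (polygrowth_horner (lexx (-1)) B%:P).
exists (Num.max C1 C2) => x x_gt; rewrite normM_powR le_max.
have [x_ge0|x_lt0] := leP 0 x; first by rewrite le_C1.
apply/orP; right; apply: le_trans (le_C2 x (ltW x_gt)); rewrite hornerC ler_wpM2l ?powR_ge0 //.
by apply: le_trans (ler_norm B); apply: u_le; rewrite x_gt ltW.
Qed.

Lemma weighted_u_bounded_away u d : symplectic_potential H u -> 0 < d ->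
  exists C, forall x, -1 + d <= x ->
    `|v x `^ eps * u x| + `|v x `^ eps * derive1 u x|
      + `|v x `^ eps * derive1 (derive1 u) x| <= C.
Proof.
move=> u_pot d_gt0; have d_ge : -1 <= -1 + d by lra.
have [C1 le_C1] := weighted_bounded d_ge (polygrowth_u u_pot d_gt0).
have [C2 le_C2] := weighted_bounded d_ge (polygrowth_du u_pot d_gt0).
have [C3 le_C3] := weighted_bounded d_ge (polygrowth_invH d_gt0).
exists (C1 + C2 + C3) => x x_ge; have x_gt : -1 < x by lra.
have [_ [_ ->]] := u_pot x x_gt; rewrite !normM_powR.
by have := le_C1 x x_ge; have := le_C2 x x_ge; have := le_C3 x x_ge; lra.
Qed.

End Weighted.

End CscK.

Theorem proposition1p3 (R : realType) (a b q : {poly R}) (lam : R) :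
  positive_ratfun_on_P a b ->
  0 < lam ->
  Futaki_vanishes_on_affine (weight_v a b lam) (weight_w q lam) ->
  K_stable (weight_v a b lam) (weight_w q lam) ->
  forall H : R -> R, cscK_metric (weight_v a b lam) (weight_w q lam) H ->
  forall eps : R, 0 < eps < 2^-1 -> in_H_class (weight_v a b lam) eps H.
Proof.
move=> ab_pos lam_gt0 futaki0 _ H cscK eps /andP[eps_gt0 eps_lt].
have eps_le1 : eps <= 1 by lra.
split; first exact: (weighted_H2_bounded ab_pos lam_gt0 futaki0 cscK eps_gt0 eps_le1).
split; first exact: (weighted_dH2_bounded ab_pos lam_gt0 futaki0 cscK eps_gt0 eps_le1).
split; first exact: (ddH_sq_bounded_near ab_pos lam_gt0 futaki0 cscK).
move=> u u_pot; split.
  exact: (weighted_u_bounded ab_pos lam_gt0 futaki0 cscK eps_gt0 eps_le1 u_pot).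
exists 1; split=> // d /andP[d_gt0 _].
exact: (weighted_u_bounded_away ab_pos lam_gt0 futaki0 cscK eps_gt0 eps_le1 u_pot d_gt0).
Qed.
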